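(* For each positive integer $i$ let $\mathcal{F}_i$ be an edge-coloured digraph with $i$ vertices all of whose edges are double. For each composition $\alpha=(\alpha_1,\dots,\alpha_k)\vDash n$, let $\mathcal{F}_\alpha$ be the solid sum $\mathcal{F}_{\alpha_1}\ \text{solid-sum}\ \mathcal{F}_{\alpha_2}\ \text{solid-sum}\cdots\text{solid-sum}\ \mathcal{F}_{\alpha_k}$. Then $\{\mathscr{X}_{\mathcal{F}_\alpha}(x):\alpha\vDash n\}$ is a basis of $\mathrm{QSym}_n(x)$.
   Context: An edge-coloured digraph is a finite simple digraph with each edge of type dashed, solid ($a\rightarrow b$) or double ($a\Rightarrow b$). The solid sum of $G_1$ and $G_2$ is their disjoint union together with a solid edge $(a,b)$ for every $a\in V(G_1)$, $b\in V(G_2)$ (this operation is associative). A proper vertex-colouring is $\kappa:V\to\mathbb{P}$ with $\kappa(a)\ne\kappa(b)$, $\kappa(a)<\kappa(b)$, $\kappa(a)\le\kappa(b)$ for dashed, solid, double edges $(a,b)$ respectively, and $\mathscr{X}_G(x)=\sum_\kappa\prod_{a\in V(G)}x_{\kappa(a)}$ over proper vertex-colourings, in commuting variables. $\mathrm{QSym}_n(x)$ is the space of quasisymmetric functions homogeneous of degree $n$ (formal power series such that for each composition $(\beta_1,\dots,\beta_k)$ of $n$ all monomials $x_{i_1}^{\beta_1}\cdots x_{i_k}^{\beta_k}$ with $i_1<\dots<i_k$ have the same coefficient, and no other monomials occur). *)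

From mathcomp Require Import all_boot all_order all_algebra.
Set Implicit Arguments. Unset Strict Implicit. Unset Printing Implicit Defensive.
Import GRing.Theory Num.Theory.
Local Open Scope ring_scope.

Inductive ecol := Dashed | Solid | Double.

Record ecdigraph := ECD { nv : nat; edge : 'I_nv -> 'I_nv -> option ecol }.

(* simple: no loops (at most one edge per ordered pair is built into [edge]) *)
Definition simple_ecd (G : ecdigraph) : Prop := forall a, @edge G a a = None.

Definition empty_ecd : ecdigraph := @ECD 0 (fun _ _ => None).

Definition solid_sum (G H : ecdigraph) : ecdigraph :=
  @ECD (nv G + nv H) (fun a b =>
    match split a, split b with
    | inl x, inl y => @edge G x y
    | inr x, inr y => @edge H x y
    | inl _, inr _ => Some Solid
    | inr _, inl _ => None
    end).

Definition solid_sum_list (s : seq ecdigraph) : ecdigraph :=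
  foldr solid_sum empty_ecd s.

Definition is_comp (n : nat) (s : seq nat) : bool :=
  all (fun a => 0 < a)%N s && (sumn s == n).

Fixpoint seqs (m k : nat) : seq (seq nat) :=
  if m is m'.+1 then [seq i :: s | i <- iota 1 k, s <- seqs m' k] else [:: [::]].

Definition compn (n : nat) : seq (seq nat) :=
  [seq s <- flatten [seq seqs m n | m <- iota 0 n.+1] | is_comp n s].

(* A monomial x_{i_1}^{b_1} ... x_{i_k}^{b_k}, 0 < i_1 < ... < i_k, b_j > 0,
   is encoded as the list [:: (i_1,b_1); ...; (i_k,b_k)]. *)
Definition wf_mono (m : seq (nat * nat)) : bool :=
  sorted ltn (map fst m) && all (fun p => (0 < p.1) && (0 < p.2))%N m.

Definition mdeg (m : seq (nat * nat)) : nat := sumn (map snd m).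

(* A formal power series in commuting variables x_1, x_2, ... over Q:
   its coefficient on each (well-formed code of a) monomial. *)
Definition series := seq (nat * nat) -> rat.

Definition QSym (n : nat) (f : series) : Prop :=
  (forall m, wf_mono m -> mdeg m != n -> f m = 0) /\
  (forall m m', wf_mono m -> wf_mono m' -> map snd m = map snd m' -> f m = f m').

Definition proper_edge (e : option ecol) (x y : nat) : bool :=
  match e with
  | None => true
  | Some Dashed => x != y
  | Some Solid => (x < y)%N
  | Some Double => (x <= y)%N
  end.

Definition proper_col (G : ecdigraph) (k : 'I_(nv G) -> nat) : bool :=
  [forall a, forall b, proper_edge (@edge G a b) (k a) (k b)].

Definition mono_of (v : nat) (k : 'I_v -> nat) : seq (nat * nat) :=
  let vs := [seq k a | a <- enum 'I_v] in
  [seq (i, count_mem i vs) | i <- sort leq (undup vs)].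

(* every colouring with monomial m takes values <= max index of m *)
Definition bnd (m : seq (nat * nat)) : nat := (\max_(p <- m) p.1).+1.

Definition chromQ (G : ecdigraph) : series := fun m =>
  (#|[set k : {ffun 'I_(nv G) -> 'I_(bnd m)} |
      [forall a, (0 < k a)%N] && @proper_col G (fun a => nat_of_ord (k a))
      && (mono_of (fun a => nat_of_ord (k a)) == m)]|)%:R.

(* b_i (i in I, I duplicate-free) is a basis of the Q-space P of series *)
Definition is_basis (I : seq (seq nat)) (P : series -> Prop)
    (b : seq nat -> series) : Prop :=
  [/\ forall i, i \in I -> P (b i),
      forall c : seq nat -> rat,
        (forall m, wf_mono m -> \sum_(i <- I) c i * b i m = 0) ->
        forall i, i \in I -> c i = 0
    & forall f, P f -> exists c : seq nat -> rat,
        forall m, wf_mono m -> f m = \sum_(i <- I) c i * b i m].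

(* For a composition b = (b_1, ..., b_k), evaluating a quasisymmetric function at the
   monomial x_1^b_1 ... x_k^b_k reads off its coefficient on the monomial basis element
   M_b.  For X_{F_a} this coefficient counts the proper colourings with colour content b.
   Every edge between two blocks of F_a is solid and points forward, so colours strictly
   increase from block to block: such a colouring needs at least l(a) colours, and when
   l(a) = l(b) it must give colour j to the whole j-th block, which forces a = b and
   leaves exactly one colouring.  So the transition matrix from {X_{F_a}} to {M_b} is
   unitriangular with respect to length, and {X_{F_a}} is a basis of QSym_n. *)

From mathcomp Require Import all_boot all_order all_algebra.
From mathcomp Require Import zify.
Set Implicit Arguments. Unset Strict Implicit. Unset Printing Implicit Defensive.
Import GRing.Theory Num.Theory.

(** * Monomials *)

Definition mono_mult (m : seq (nat * nat)) (i : nat) : nat :=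
  if i \in map fst m then nth 0 (map snd m) (index i (map fst m)) else 0.

Definition col_mult v (k : 'I_v -> nat) (i : nat) : nat := \sum_(a < v) (k a == i).

Lemma col_mult_gt0 v (k : 'I_v -> nat) a : 0 < col_mult k (k a).
Proof. by rewrite /col_mult (bigD1 a) //= eqxx. Qed.

Lemma mono_mult_mono_of v (k : 'I_v -> nat) i : mono_mult (mono_of k) i = col_mult k i.
Proof.
rewrite /mono_mult /mono_of.
set vs := [seq k a | a <- enum 'I_v].
have -> : col_mult k i = count_mem i vs.
  by rewrite count_map -sum1_count big_enum_cond big_mkcond.
rewrite -!map_comp map_id /= mem_sort mem_undup.
case: ifP => [iv | /negbT/count_memPn -> //].
by rewrite (nth_map 0) ?nth_index ?index_mem ?mem_sort ?mem_undup.
Qed.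

Lemma wf_mono_of v (k : 'I_v -> nat) : (forall a, 0 < k a) -> wf_mono (mono_of k).
Proof.
move=> k_gt0; rewrite /wf_mono /mono_of -map_comp map_id.
rewrite ltn_sorted_uniq_leq sort_uniq undup_uniq sort_sorted /=; last exact: leq_total.
apply/allP => p /mapP[j]; rewrite mem_sort mem_undup => /mapP[a _ ->] -> /=.
rewrite k_gt0 -has_count; apply/hasP; exists (k a).
  exact: map_f (mem_enum _ _).
exact: eqxx.
Qed.

Lemma mdeg_mono_of v (k : 'I_v -> nat) : mdeg (mono_of k) = v.
Proof.
rewrite /mdeg /mono_of -map_comp.
set vs := [seq k a | a <- enum 'I_v].
have -> : v = size vs by rewrite size_map size_enum_ord.
rewrite -(perm_size (perm_count_undup vs)) size_flatten /shape -map_comp sumnE big_map.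
rewrite sumnE big_map (perm_big _ (permEl (perm_sort _ _))).
by apply: eq_bigr => i _; rewrite /= size_nseq.
Qed.

Lemma mono_mult_gt0 m i : wf_mono m -> (0 < mono_mult m i) = (i \in map fst m).
Proof.
case/andP=> _ /allP m_gt0; rewrite /mono_mult; case: ifP => // im.
have : nth 0 (map snd m) (index i (map fst m)) \in map snd m.
  by rewrite mem_nth // size_map -(size_map fst) index_mem.
by case/mapP=> p /m_gt0 /andP[_ p2_gt0] ->.
Qed.

Lemma wf_mono_uniq m : wf_mono m -> uniq (map fst m).
Proof. by case/andP=> /sorted_uniq-> //; [exact: ltn_trans | exact: ltnn]. Qed.

Lemma wf_mono_inj m1 m2 : wf_mono m1 -> wf_mono m2 ->
  mono_mult m1 =1 mono_mult m2 -> m1 = m2.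
Proof.
move=> m1_wf m2_wf mult12.
have keys12 : map fst m1 = map fst m2.
  apply: (irr_sorted_eq ltn_trans ltnn); [by case/andP: m1_wf | by case/andP: m2_wf |].
  by move=> i; rewrite -!mono_mult_gt0 ?mult12.
have exps12 : map snd m1 = map snd m2.
  apply: (@eq_from_nth _ 0); first by rewrite !size_map -(size_map fst m1) keys12 size_map.
  move=> j; rewrite size_map => j_lt.
  have key_j : nth 0 (map fst m1) j \in map fst m1 by rewrite mem_nth ?size_map.
  have := mult12 (nth 0 (map fst m1) j); rewrite /mono_mult -keys12 key_j.
  by rewrite index_uniq ?size_map ?wf_mono_uniq.
by rewrite -(zip_unzip m1) -(zip_unzip m2) /unzip1 /unzip2 keys12 exps12.
Qed.

Lemma mono_ofP v (k : 'I_v -> nat) m : wf_mono m -> (forall a, 0 < k a) ->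
  reflect (forall i, col_mult k i = mono_mult m i) (mono_of k == m).
Proof.
move=> m_wf k_gt0; apply: (iffP eqP) => [<- i | km]; first by rewrite mono_mult_mono_of.
by apply: wf_mono_inj (wf_mono_of k_gt0) m_wf _ => i; rewrite mono_mult_mono_of.
Qed.

Lemma mono_of_mem v (k : 'I_v -> nat) m a : wf_mono m -> (forall a, 0 < k a) ->
  mono_of k = m -> k a \in map fst m.
Proof.
move=> m_wf k_gt0 /eqP/(mono_ofP m_wf k_gt0) km.
by rewrite -mono_mult_gt0 // -km col_mult_gt0.
Qed.

(** * Quasisymmetry of chromatic functions *)

Lemma proper_edge_mono e (f : nat -> nat) (D : {pred nat}) x y :
  {in D &, {mono f : x y / x <= y}} -> x \in D -> y \in D ->
  proper_edge e (f x) (f y) = proper_edge e x y.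
Proof.
move=> f_mono xD yD; case: e => [[]|] //=; last exact: f_mono.
  by rewrite (inj_in_eq (incn_inj_in f_mono)).
exact: (leqW_mono_in f_mono).
Qed.

Section SortedReindex.

Variables K K' : seq nat.
Hypotheses (K_sorted : sorted ltn K) (K'_sorted : sorted ltn K').
Hypothesis K_size : size K = size K'.

Definition reindex (x : nat) : nat := nth 0 K' (index x K).

Lemma reindex_mem x : x \in K -> reindex x \in K'.
Proof. by move=> xK; rewrite mem_nth // -K_size index_mem. Qed.

Lemma reindex_index x : x \in K -> index (reindex x) K' = index x K.
Proof.
by move=> xK; rewrite index_uniq ?(sorted_uniq ltn_trans ltnn) // -K_size index_mem.
Qed.

Lemma reindex_mono : {in K &, {mono reindex : x y / x <= y}}.
Proof.
apply: leq_mono_in => x y xK yK x_lt_y.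
have K_leq : sorted leq K by apply: sub_sorted K_sorted => ? ? /ltnW.
have idx_lt : index x K < index y K.
  rewrite ltnNge; apply: contraTN x_lt_y.
  by move/(sorted_leq_index leq_trans leqnn K_leq _ _ yK xK); rewrite -leqNgt.
by apply: (sorted_ltn_nth ltn_trans 0 K'_sorted); rewrite // inE -K_size index_mem.
Qed.

Lemma reindex_onto y : y \in K' -> exists2 x, x \in K & reindex x = y.
Proof.
move=> yK'; exists (nth 0 K (index y K')); first by rewrite mem_nth // K_size index_mem.
by rewrite /reindex index_uniq ?K_size ?index_mem ?nth_index ?(sorted_uniq ltn_trans ltnn).
Qed.

End SortedReindex.

Definition colourings (G : ecdigraph) (m : seq (nat * nat)) :=
  [set k : {ffun 'I_(nv G) -> 'I_(bnd m)} | [forall a, 0 < k a]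
     && proper_col (fun a => nat_of_ord (k a))
     && (mono_of (fun a => nat_of_ord (k a)) == m)].

Lemma chromQE G m : chromQ G m = (#|colourings G m|%:R)%R.
Proof. by []. Qed.

Lemma key_lt_bnd m x : x \in map fst m -> x < bnd m.
Proof.
case/mapP=> p pm ->; rewrite ltnS.
exact: (@leq_bigmax_seq _ m xpredT (fun p : nat * nat => p.1) p pm).
Qed.

Lemma wf_mono_key_gt0 m x : wf_mono m -> x \in map fst m -> 0 < x.
Proof. by case/andP=> _ /allP m_gt0 /mapP[p /m_gt0 /andP[p1_gt0 _] ->]. Qed.

Lemma mono_mult_reindex m m' x : wf_mono m -> wf_mono m' ->
  map snd m = map snd m' -> x \in map fst m ->
  mono_mult m' (reindex (map fst m) (map fst m') x) = mono_mult m x.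
Proof.
move=> /andP[K_sorted _] /andP[K'_sorted _] exps_eq xK.
have K_size : size (map fst m) = size (map fst m').
  by rewrite !size_map -(size_map snd m) exps_eq size_map.
by rewrite /mono_mult reindex_mem // xK reindex_index ?exps_eq.
Qed.

(* Composing with the order isomorphism between the variables of m and those of m'
   preserves properness and turns the monomial m into m'. *)
Lemma colourings_leq G m m' : wf_mono m -> wf_mono m' -> map snd m = map snd m' ->
  #|colourings G m| <= #|colourings G m'|.
Proof.
move=> m_wf m'_wf exps_eq; set K := map fst m; set K' := map fst m'.
have K_size : size K = size K' by rewrite !size_map -(size_map snd m) exps_eq size_map.
have K_sorted : sorted ltn K by case/andP: m_wf.
have K'_sorted : sorted ltn K' by case/andP: m'_wf.
pose f := reindex K K'.
have f_mono : {in K &, {mono f : x y / x <= y}} := reindex_mono K_sorted K'_sorted K_size.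
have f_inj : {in K &, injective f} := incn_inj_in f_mono.
have kK k : k \in colourings G m -> forall a, nat_of_ord (k a) \in K.
  by rewrite inE => /andP[/andP[/forallP k_gt0 _] /eqP km] a; apply: mono_of_mem km.
pose Phi (k : {ffun 'I_(nv G) -> 'I_(bnd m)}) : {ffun 'I_(nv G) -> 'I_(bnd m')} :=
  [ffun a => inord (f (k a))].
have PhiE k a : k \in colourings G m -> nat_of_ord (Phi k a) = f (k a).
  by move=> kS; rewrite ffunE inordK // key_lt_bnd // reindex_mem ?kK.
have Phi_gt0 k a : k \in colourings G m -> 0 < Phi k a.
  by move=> kS; rewrite PhiE // (wf_mono_key_gt0 m'_wf) // reindex_mem ?kK.
rewrite -(card_in_imset (f := Phi)); last first.
  move=> k1 k2 k1S k2S /ffunP Phi12; apply/ffunP => a; apply: val_inj => /=.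
  by apply: f_inj; rewrite ?kK // -!PhiE ?Phi12.
apply/subset_leq_card/subsetP => _ /imsetP[k kS ->].
have := kS; rewrite inE => /andP[/andP[/forallP k_gt0 k_proper] /eqP km].
rewrite inE; apply/andP; split; first (apply/andP; split).
- by apply/forallP => a; apply: Phi_gt0.
- apply/forallP => a; apply/forallP => b; rewrite !PhiE // (proper_edge_mono _ f_mono) ?kK //.
  by move/forallP: k_proper => /(_ a) /forallP.
apply/(mono_ofP m'_wf) => [a | i]; first exact: Phi_gt0.
rewrite /col_mult; under eq_bigr => a _ do rewrite PhiE //.
have [iK' | iK'] := boolP (i \in K'); last first.
  rewrite /mono_mult -/K' (negbTE iK') big1 // => a _.
  by case: eqP => // fki; move: iK'; rewrite -fki reindex_mem ?kK.
have [x xK <-] := reindex_onto K_sorted K_size iK'.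
rewrite mono_mult_reindex //; move/eqP/(mono_ofP m_wf (fun a => k_gt0 a)): km => <-.
by apply: eq_bigr => a _; rewrite (inj_in_eq f_inj) ?kK.
Qed.

Lemma chromQ_QSym G : QSym (nv G) (chromQ G).
Proof.
split=> [m _ m_deg | m m' m_wf m'_wf exps_eq].
  apply/eqP; rewrite chromQE pnatr_eq0 cards_eq0; apply/eqP/setP => k.
  rewrite inE in_set0; apply: contraNF m_deg => /andP[_ /eqP <-].
  by rewrite mdeg_mono_of.
by rewrite !chromQE; congr (_%:R)%R; apply/anti_leq; rewrite !colourings_leq.
Qed.

(** * Solid sums *)

Definition canon_mono (b : seq nat) : seq (nat * nat) := zip (iota 1 (size b)) b.

Lemma canon_mono_fst b : map fst (canon_mono b) = iota 1 (size b).
Proof. by rewrite -/(unzip1 _) unzip1_zip // size_iota. Qed.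

Lemma canon_mono_snd b : map snd (canon_mono b) = b.
Proof. by rewrite -/(unzip2 _) unzip2_zip // size_iota. Qed.

Lemma wf_canon_mono b : all (fun x => 0 < x) b -> wf_mono (canon_mono b).
Proof.
move=> b_gt0; apply/andP; split; first by rewrite canon_mono_fst iota_ltn_sorted.
apply/allP => p pb; apply/andP; split.
  have : p.1 \in map fst (canon_mono b) by apply: map_f.
  by rewrite canon_mono_fst mem_iota => /andP[].
have : p.2 \in map snd (canon_mono b) by apply: map_f.
by rewrite canon_mono_snd => /(allP b_gt0).
Qed.

Lemma mono_mult_canon_mono0 b : mono_mult (canon_mono b) 0 = 0.
Proof. by rewrite /mono_mult canon_mono_fst mem_iota. Qed.

Lemma mono_mult_canon_monoS b j : mono_mult (canon_mono b) j.+1 = nth 0 b j.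
Proof.
rewrite /mono_mult canon_mono_fst canon_mono_snd mem_iota add1n ltnS /=.
case: ltnP => [j_lt | j_ge]; last by rewrite nth_default.
have -> : j.+1 = nth 0 (iota 1 (size b)) j by rewrite nth_iota.
by rewrite index_uniq ?size_iota ?iota_uniq.
Qed.

Fixpoint block (Gs : seq ecdigraph) : 'I_(nv (solid_sum_list Gs)) -> nat :=
  match Gs with
  | [::] => fun _ => 0
  | G :: Gs' => fun u => if split u is inr x then (@block Gs' x).+1 else 0
  end.

Definition double_only (G : ecdigraph) : Prop :=
  forall a b c, @edge G a b = Some c -> c = Double.

Lemma block_lt Gs u : @block Gs u < size Gs.
Proof.
elim: Gs u => [|G Gs IH] u /=; first by case: u.
by case: (split u).
Qed.

Lemma block_lt_edge Gs u w :
  @block Gs u < @block Gs w -> @edge (solid_sum_list Gs) u w = Some Solid.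
Proof.
elim: Gs u w => [|G Gs IH] u w /=; first by case: u.
by case: (split u) => x; case: (split w) => y //; rewrite ltnS => /IH.
Qed.

Lemma block_edge Gs u w c : List.Forall double_only Gs ->
  @edge (solid_sum_list Gs) u w = Some c ->
  c = Solid /\ @block Gs u < @block Gs w \/ c = Double /\ @block Gs u = @block Gs w.
Proof.
elim: Gs u w => [|G Gs IH] u w; first by case: u.
move=> /List.Forall_cons_iff[G_double Gs_double] /=.
case: (split u) => x; case: (split w) => y //.
- by move/G_double ->; right.
- by case=> <-; left.
by move/IH => /(_ Gs_double) [] [-> ?]; [left | right]; split; last congr S.
Qed.

Lemma col_mult_block Gs i : col_mult (@block Gs) i = nth 0 (map nv Gs) i.
Proof.
elim: Gs i => [|G Gs IH] i; first by rewrite /col_mult big_ord0; case: i.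
rewrite /col_mult big_split_ord /=.
under eq_bigr do rewrite -[lshift _ _]/(unsplit (inl _)) unsplitK.
under [X in (_ + X)%N]eq_bigr do rewrite -[rshift _ _]/(unsplit (inr _)) unsplitK.
case: i => [|i] /=.
  by rewrite [X in (_ + X)%N]big1 // addn0 sum1_card card_ord.
by rewrite big1 // add0n -IH.
Qed.

Lemma block_colouring_bound (T : Type) (blk k : T -> nat) s t :
  (forall u w, blk u < blk w -> k u < k w) ->
  (forall i, i < s -> exists u, blk u = i) ->
  (forall u, blk u < s) ->
  (forall u, 0 < k u <= t) ->
  s <= t /\ (s = t -> forall u, k u = (blk u).+1).
Proof.
move=> k_incr blk_onto blk_lt k_range.
have k_lb i u : blk u = i -> i < k u.
  elim: i u => [|i IH] u blk_u; first by case/andP: (k_range u).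
  have [w blk_w] : exists w, blk w = i by apply: blk_onto; rewrite -blk_u ltnW.
  by apply: leq_ltn_trans (IH w blk_w) (k_incr _ _ _); rewrite blk_w blk_u.
have k_ub d u : (blk u + d).+1 = s -> k u + d <= t.
  elim: d u => [|d IH] u blk_u; first by rewrite addn0; case/andP: (k_range u).
  have [w blk_w] : exists w, blk w = (blk u).+1 by apply: blk_onto; rewrite -blk_u; lia.
  have := IH w; rewrite blk_w => /(_ ltac:(lia)).
  have := k_incr u w; rewrite blk_w ltnSn => /(_ isT); lia.
have k_ub' u : k u + (s - (blk u).+1) <= t by apply: k_ub; have := blk_lt u; lia.
split=> [|s_t u]; last by have := k_ub' u; have := k_lb _ u erefl; have := blk_lt u; lia.
case: (posnP s) => [-> // | s_gt0].
by have [u blk_u] := blk_onto 0 s_gt0; have := k_ub' u; have := k_lb _ _ blk_u; lia.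
Qed.

Lemma col_mult_gt0_exists v (k : 'I_v -> nat) i : 0 < col_mult k i -> exists a, k a = i.
Proof.
case: (pickP (fun a => k a == i)) => [a /eqP | none]; first by exists a.
by rewrite /col_mult big1 // => a _; rewrite none.
Qed.

Lemma col_mult_block_succ Gs i :
  col_mult (fun u => (@block Gs u).+1) i = mono_mult (canon_mono (map nv Gs)) i.
Proof.
case: i => [|i]; last by rewrite mono_mult_canon_monoS -col_mult_block.
by rewrite mono_mult_canon_mono0 /col_mult big1 // => u.
Qed.

Lemma solid_sum_colouring Gs b k :
  all (fun n => 0 < n) (map nv Gs) -> all (fun x => 0 < x) b ->
  k \in colourings (solid_sum_list Gs) (canon_mono b) ->
  size Gs <= size b /\ (size Gs = size b -> forall u, nat_of_ord (k u) = (@block Gs u).+1).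
Proof.
move=> Gs_gt0 b_gt0; rewrite inE => /andP[/andP[/forallP k_gt0 /forallP k_proper] /eqP km].
apply: (@block_colouring_bound _ (@block Gs) (fun u => nat_of_ord (k u))).
- move=> u w /block_lt_edge uw_solid.
  by move/forallP: (k_proper u) => /(_ w); rewrite uw_solid.
- move=> i i_lt; apply: col_mult_gt0_exists.
  by rewrite col_mult_block (allP Gs_gt0) // mem_nth ?size_map.
- exact: block_lt.
move=> u; have := @mono_of_mem _ _ _ u (wf_canon_mono b_gt0) k_gt0 km.
by rewrite canon_mono_fst mem_iota add1n ltnS.
Qed.

Lemma chromQ_solid_sum_neq0 Gs b :
  all (fun n => 0 < n) (map nv Gs) -> all (fun x => 0 < x) b ->
  chromQ (solid_sum_list Gs) (canon_mono b) != 0%R ->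
  size Gs <= size b /\ (size Gs = size b -> map nv Gs = b).
Proof.
move=> Gs_gt0 b_gt0; rewrite chromQE pnatr_eq0 -lt0n => /card_gt0P[k kS].
have [size_le k_block] := solid_sum_colouring Gs_gt0 b_gt0 kS.
split=> // size_eq; rewrite -[b]canon_mono_snd -[map nv Gs]canon_mono_snd; congr map.
apply: wf_mono_inj; [exact: wf_canon_mono | exact: wf_canon_mono |] => i.
move: kS; rewrite inE => /andP[/andP[/forallP k_gt0 _] /(mono_ofP _ k_gt0) km].
rewrite -col_mult_block_succ -km ?wf_canon_mono //.
by apply: eq_bigr => u _; rewrite k_block.
Qed.

Lemma chromQ_solid_sum_diag Gs :
  List.Forall double_only Gs -> all (fun n => 0 < n) (map nv Gs) ->
  chromQ (solid_sum_list Gs) (canon_mono (map nv Gs)) = 1%R.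
Proof.
move=> Gs_double Gs_gt0; rewrite chromQE.
pose k0 : {ffun 'I_(nv (solid_sum_list Gs)) -> 'I_(bnd (canon_mono (map nv Gs)))} :=
  [ffun u => inord (@block Gs u).+1].
have k0E u : nat_of_ord (k0 u) = (@block Gs u).+1.
  rewrite ffunE inordK // key_lt_bnd // canon_mono_fst mem_iota add1n ltnS size_map.
  exact: block_lt.
suff -> : colourings (solid_sum_list Gs) (canon_mono (map nv Gs)) = [set k0] by rewrite cards1.
apply/setP => k; rewrite in_set1; apply/idP/eqP => [kS | ->].
  have [_ k_block] := solid_sum_colouring Gs_gt0 Gs_gt0 kS.
  by apply/ffunP => u; apply: val_inj; rewrite /= k_block ?size_map ?k0E.
rewrite inE; apply/andP; split; first (apply/andP; split).
- by apply/forallP => u; rewrite k0E.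
- apply/forallP => u; apply/forallP => w; rewrite !k0E.
  case uw : edge => [c|] //.
  by case: (block_edge Gs_double uw) => [[-> ?] | [-> ->]] /=.
apply/(mono_ofP (wf_canon_mono Gs_gt0)) => [u | i]; first by rewrite k0E.
by rewrite -col_mult_block_succ; apply: eq_bigr => u _; rewrite k0E.
Qed.

(** * Compositions and unitriangular systems *)

Lemma mem_seqs m k s : (s \in seqs m k) = (size s == m) && all (fun x => 0 < x <= k) s.
Proof.
elim: m s => [|m IH] s; first by case: s.
apply/allpairsP/idP => [[[i t] /= [i_in t_in ->]] | ].
  by move: i_in t_in; rewrite mem_iota IH add1n ltnS /= eqSS => -> /andP[-> ->].
case: s => // x s /andP[size_s /andP[x_in s_in]].
by exists (x, s); rewrite mem_iota IH add1n ltnS x_in -eqSS size_s.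
Qed.

Lemma seqs_uniq m k : uniq (seqs m k).
Proof.
elim: m => [|m IH] //=; apply: allpairs_uniq => //; first exact: iota_uniq.
by move=> [? ?] [? ?] _ _ /= [-> ->].
Qed.

Lemma flatten_uniq_size (T : eqType) (f : nat -> seq (seq T)) r : uniq r ->
  (forall m, uniq (f m)) -> (forall m s, s \in f m -> size s = m) ->
  uniq (flatten (map f r)).
Proof.
move=> + f_uniq f_size; elim: r => //= m r IH /andP[m_notin r_uniq].
rewrite cat_uniq f_uniq IH // andbT; apply/hasPn => s /flatten_mapP[m' m'_in s_in].
by apply: contra m_notin => /f_size m_eq; rewrite -m_eq (f_size _ _ s_in).
Qed.

Lemma compn_uniq n : uniq (compn n).
Proof.
apply/filter_uniq/flatten_uniq_size => [|m|m s]; rewrite ?iota_uniq ?seqs_uniq //.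
by rewrite mem_seqs => /andP[/eqP].
Qed.

Lemma size_leq_sumn s : all (fun x => 0 < x) s -> size s <= sumn s.
Proof. by elim: s => //= x s IH /andP[x_gt0 /IH]; rewrite -add1n; apply: leq_add. Qed.

Lemma leq_sumn x s : x \in s -> x <= sumn s.
Proof.
elim: s => //= y s IH; rewrite inE => /predU1P[-> | /IH]; first exact: leq_addr.
by move/leq_trans; apply; apply: leq_addl.
Qed.

Lemma mem_compn n s : (s \in compn n) = is_comp n s.
Proof.
rewrite mem_filter andb_idr // => /andP[s_gt0 /eqP s_sum].
apply/flatten_mapP; exists (size s); first by rewrite mem_iota ltnS -s_sum size_leq_sumn.
rewrite mem_seqs eqxx; apply/allP => x x_in.
by rewrite (allP s_gt0) //= -s_sum leq_sumn.
Qed.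

Section UnitriangularSystem.

Local Open Scope ring_scope.

Variables (R : pzRingType) (I : eqType) (s : seq I) (rank : I -> nat) (M : I -> I -> R).
Hypothesis s_uniq : uniq s.
Hypothesis M_diag : {in s, forall b, M b b = 1}.
Hypothesis M_triangular :
  {in s &, forall a b, a != b -> M a b != 0 -> (rank a < rank b)%N}.

Lemma unitriangular_sumE c b : b \in s ->
  \sum_(a <- s) c a * M a b = c b + \sum_(a <- s | (rank a < rank b)%N) c a * M a b.
Proof.
move=> bs; rewrite (bigD1_seq b) //= M_diag // mulr1; congr (_ + _).
rewrite [LHS]big_mkcond [RHS]big_mkcond; apply: eq_big_seq => a a_s /=.
have [-> | ab] := eqVneq a b; first by rewrite ltnn.
case: ltnP => // rank_ge; have [-> | Mab] := eqVneq (M a b) 0; first by rewrite mulr0.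
by move: rank_ge; rewrite leqNgt M_triangular.
Qed.

Lemma unitriangular_free c :
  {in s, forall b, \sum_(a <- s) c a * M a b = 0} -> {in s, forall b, c b = 0}.
Proof.
move=> c_sol; suff c_lt t : {in s, forall b, (rank b < t)%N -> c b = 0}.
  by move=> b bs; apply: (c_lt (rank b).+1).
elim: t => // t IH b bs rank_b; have := c_sol b bs.
rewrite unitriangular_sumE // big1_seq ?addr0 // => a /andP[rank_a a_s].
by rewrite IH ?mul0r // (leq_trans rank_a).
Qed.

Lemma unitriangular_solve f :
  exists c, {in s, forall b, \sum_(a <- s) c a * M a b = f b}.
Proof.
suff sol t :
    exists c, {in s, forall b, (rank b < t)%N -> \sum_(a <- s) c a * M a b = f b}.
  have [c c_sol] := sol (\max_(b <- s) rank b).+1.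
  exists c => b bs; apply: c_sol => //; rewrite ltnS.
  exact: (@leq_bigmax_seq _ s xpredT rank b).
elim: t => [|t [c c_sol]]; first by exists (fun _ => 0).
(* Only the unknowns of rank t change, and no equation of smaller rank involves them. *)
pose c' a :=
  if rank a == t then f a - \sum_(a' <- s | (rank a' < t)%N) c a' * M a' a else c a.
have low_sum b : (rank b <= t)%N ->
    \sum_(a <- s | (rank a < rank b)%N) c' a * M a b
  = \sum_(a <- s | (rank a < rank b)%N) c a * M a b.
  move=> rank_b; apply: eq_bigr => a rank_a.
  by rewrite /c' ifN // neq_ltn (leq_trans rank_a).
exists c' => b bs; rewrite ltnS => rank_b; rewrite unitriangular_sumE // low_sum //.
have [rank_bt | rank_bt] := eqVneq (rank b) t.
  by rewrite /c' rank_bt eqxx subrK.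
rewrite /c' (negbTE rank_bt) -unitriangular_sumE // c_sol //.
by rewrite ltn_neqAle rank_bt.
Qed.

End UnitriangularSystem.

Lemma nv_solid_sum_list Gs : nv (solid_sum_list Gs) = sumn (map nv Gs).
Proof. by elim: Gs => //= G Gs ->. Qed.

Lemma wf_mono_comp m : wf_mono m -> is_comp (mdeg m) (map snd m).
Proof.
case/andP=> _ /allP m_gt0; rewrite /is_comp eqxx andbT.
by apply/allP => _ /mapP[p /m_gt0 /andP[_ p2_gt0] ->].
Qed.

Lemma QSym_basis_unitriangular n (X : seq nat -> series) :
  {in compn n, forall a, QSym n (X a)} ->
  {in compn n, forall b, X b (canon_mono b) = 1%R} ->
  {in compn n &, forall a b, a != b -> X a (canon_mono b) != 0%R -> size a < size b} ->
  is_basis (compn n) (QSym n) X.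
Proof.
move=> X_QSym X_diag X_triangular.
have comp_gt0 b : b \in compn n -> all (fun x => 0 < x) b by rewrite mem_compn => /andP[].
split=> [// | c c_free | f [f_homog f_qsym]].
  apply: (unitriangular_free (compn_uniq n) X_diag X_triangular) => b b_in.
  exact/c_free/wf_canon_mono/comp_gt0.
have [c c_sol] := unitriangular_solve (compn_uniq n) X_diag X_triangular
  (fun b => f (canon_mono b)).
exists c => m m_wf; have [m_deg | m_deg] := eqVneq (mdeg m) n; last first.
  rewrite f_homog // big1_seq // => a /andP[_ a_in].
  by have [X_homog _] := X_QSym a a_in; rewrite X_homog ?mulr0.
have b_in : map snd m \in compn n by rewrite mem_compn -m_deg wf_mono_comp.
have canon_wf := wf_canon_mono (comp_gt0 _ b_in).
rewrite (f_qsym _ _ m_wf canon_wf) ?canon_mono_snd // -c_sol //.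
apply: eq_big_seq => a a_in; congr (_ * _)%R.
by have [_ X_qsym] := X_QSym a a_in; apply: X_qsym; rewrite ?canon_mono_snd.
Qed.

Section SolidSumsOfDoubleGraphs.

Variable F : nat -> ecdigraph.
Hypothesis F_nv : forall i, 0 < i -> nv (F i) = i.
Hypothesis F_double : forall i, 0 < i -> double_only (F i).

Lemma nv_map_F a : all (fun x => 0 < x) a -> map nv [seq F x | x <- a] = a.
Proof.
move/allP=> a_gt0; rewrite -map_comp -[RHS]map_id.
by apply/eq_in_map => x /a_gt0 /F_nv.
Qed.

Lemma double_only_map_F a :
  all (fun x => 0 < x) a -> List.Forall double_only [seq F x | x <- a].
Proof.
elim: a => //= x a IH /andP[x_gt0 a_gt0].
by constructor; [exact: F_double | exact: IH].
Qed.

Lemma chromQ_solid_sum_F_QSym a :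
  all (fun x => 0 < x) a -> QSym (sumn a) (chromQ (solid_sum_list [seq F x | x <- a])).
Proof.
move=> a_gt0; have := chromQ_QSym (solid_sum_list [seq F x | x <- a]).
by rewrite nv_solid_sum_list nv_map_F.
Qed.

Lemma chromQ_solid_sum_F_diag a : all (fun x => 0 < x) a ->
  chromQ (solid_sum_list [seq F x | x <- a]) (canon_mono a) = 1%R.
Proof.
move=> a_gt0; have := chromQ_solid_sum_diag (double_only_map_F a_gt0).
by rewrite nv_map_F // => /(_ a_gt0).
Qed.

Lemma chromQ_solid_sum_F_triangular a b :
  all (fun x => 0 < x) a -> all (fun x => 0 < x) b -> a != b ->
  chromQ (solid_sum_list [seq F x | x <- a]) (canon_mono b) != 0%R -> size a < size b.
Proof.
move=> a_gt0 b_gt0 ab /chromQ_solid_sum_neq0.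
rewrite nv_map_F // size_map => /(_ a_gt0 b_gt0)[size_le size_eq].
by rewrite ltn_neqAle size_le andbT; apply: contra ab => /eqP/size_eq ->.
Qed.

End SolidSumsOfDoubleGraphs.

Unset Implicit Arguments.

Theorem mainTheorem7 (F : nat -> ecdigraph)
  (HFv : forall i, (0 < i)%N -> nv (F i) = i)
  (HFs : forall i, (0 < i)%N -> simple_ecd (F i))
  (HFd : forall i, (0 < i)%N -> forall a b c, @edge (F i) a b = Some c -> c = Double)
  (n : nat) :
  is_basis (compn n) (QSym n)
    (fun alpha => chromQ (solid_sum_list [seq F a | a <- alpha])).
Proof.
have comp_gt0 a : a \in compn n -> all (fun x => 0 < x) a by rewrite mem_compn => /andP[].
apply: QSym_basis_unitriangular => [a a_in | b b_in | a b a_in b_in].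
- move: (a_in); rewrite mem_compn => /andP[_ /eqP <-].
  exact: (chromQ_solid_sum_F_QSym HFv (comp_gt0 a a_in)).
- exact: (chromQ_solid_sum_F_diag HFv HFd (comp_gt0 b b_in)).
- exact: (chromQ_solid_sum_F_triangular HFv (comp_gt0 a a_in) (comp_gt0 b b_in)).
Qed.
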